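(* Let $X$ be a topological space with $|X|\ge 2$ and $G$ an infinite Abelian group. If $X$ is not anti-discrete and has a base of clopen sets, then every Korovin orbit $G_f$ in $X^G$ is a regular zero-dimensional space.
   Context: $X^G$ carries the product topology. For $f\in X^G$ and $g\in G$ let $gf\in X^G$ be given by $(gf)(x)=f(xg)$, and let $G_f=\{gf:g\in G\}\subseteq X^G$ with the subspace topology. The map $f\colon G\to X$ is a Korovin mapping if $\pi_M(G_f)=X^M$ for every countable $M\subseteq G$, where $\pi_M\colon X^G\to X^M$ is the projection; in that case $G_f$ is called a Korovin orbit. A space is anti-discrete if its only open sets are $\emptyset$ and the whole space. Regular means $T_1$ and: every open neighborhood $U$ of a point $x$ contains an open neighborhood $V$ of $x$ with $\overline{V}\subseteq U$. Zero-dimensional means having a base of clopen sets. *)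

From HB Require Import structures.
From mathcomp Require Import all_boot all_order all_algebra.
From mathcomp Require Import all_classical all_reals all_analysis.
Set Implicit Arguments. Unset Strict Implicit. Unset Printing Implicit Defensive.
Import GRing.Theory.
Local Open Scope classical_set_scope.
Local Open Scope ring_scope.

(* gf : x |-> f (x g)  (additively: f (x + g)) *)
Definition translate {G : zmodType} {X : Type} (g : G) (f : G -> X) : G -> X :=
  fun x => f (x + g).

Definition orbit_set {G : zmodType} {X : topologicalType} (f : G -> X)
  : set {ptws G -> X} := [set translate g f | g in [set: G]].

(* f is a Korovin mapping: pi_M(G_f) = X^M for every countable M ⊆ G *)
Definition korovin {G : zmodType} {X : topologicalType} (f : G -> X) : Prop :=
  forall M : set G, countable M ->
    forall h : M -> X, exists2 k, orbit_set f k &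
      forall m : M, k (set_val m) = h m.

Definition anti_discrete (X : topologicalType) : Prop :=
  forall U : set X, open U -> U = set0 \/ U = setT.

Definition clopen_base (X : topologicalType) : Prop :=
  forall (x : X) (U : set X), open U -> U x ->
    exists V : set X, [/\ clopen V, V x & V `<=` U].

Definition regular_T1 (X : topologicalType) : Prop :=
  accessible_space X /\
  (forall (x : X) (U : set X), open U -> U x ->
     exists V : set X, [/\ open V, V x & closure V `<=` U]).

From HB Require Import structures.
From mathcomp Require Import all_boot all_order all_algebra.
From mathcomp Require Import all_classical all_reals all_analysis.
Set Implicit Arguments.
Unset Strict Implicit.
Unset Printing Implicit Defensive.
Local Open Scope classical_set_scope.

(* Zero-dimensionality passes from X to the product X^G and then to the
   subspace G_f, and a clopen neighbourhood is its own closure, which gives the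
   regularity half of the statement.  For T1, two distinct points of G_f are
   translates g1 f and g2 f with g1 <> g2; applying the Korovin property to
   M = {g1, g2} yields g with (g1 f)(g) in a proper open set U of X and
   (g2 f)(g) outside it, so the basic open set "value at g lies in U" separates
   them. *)

Lemma clopen_base_ptws (I : eqType) (X : topologicalType) :
  clopen_base X -> clopen_base {ptws I -> X}.
Proof.
move=> cbX k U oU Uk.
pose B := [set D : set {ptws I -> X} | D k /\ clopen D].
have B_filter : Filter (filter_from B id).
  apply: filter_from_filter; first by exists setT; split=> //; exact: clopenT.
  move=> C D [Ck cC] [Dk cD]; exists (C `&` D) => //.
  by split; [split | exact: clopenI].
have B_cvg : filter_from B id --> k.
  apply/cvg_sup => i A /=.
  rewrite (@nbhsE (@initial_topology (forall _ : I, X) X (fun f => f i))).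
  move=> -[_ [ [Q oQ <-] Qki] QA].
  have [W [cW Wki WQ]] := cbX (k i) Q oQ Qki.
  exists ((fun f : {ptws I -> X} => f i) @^-1` W); last by move=> g /WQ /QA.
  split=> //; apply: preimage_clopen => //.
  exact: (@proj_continuous I (fun _ => X) i).
have [D [Dk cD] DU] := B_cvg U (open_nbhs_nbhs (conj oU Uk)).
by exists D.
Qed.

Lemma clopen_base_subspace (Y : topologicalType) (A : set Y) :
  clopen_base Y -> clopen_base (set_type A).
Proof.
move=> cbY x _ [V oV <-] Vx.
have [W [cW Wx WV]] := cbY _ V oV Vx.
exists (set_val @^-1` W); split=> //; last by move=> z /WV.
by apply: preimage_clopen => //; exact: initial_continuous.
Qed.

Lemma clopen_base_closure_nbhs (Y : topologicalType) :
  clopen_base Y -> forall (x : Y) (U : set Y), open U -> U x ->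
    exists V : set Y, [/\ open V, V x & closure V `<=` U].
Proof.
move=> cbY x U oU Ux; have [V [[oV cV] Vx VU]] := cbY x U oU Ux.
by exists V; rewrite -(closure_id V).1.
Qed.

Lemma not_anti_discrete_proper_open (X : topologicalType) :
  ~ anti_discrete X -> exists U : set X, [/\ open U, exists a, U a & exists b, ~ U b].
Proof.
move=> nAD; apply: contrapT => noU; apply: nAD => U oU.
have [[a Ua]|U0] := pselect (exists a, U a); last first.
  by left; apply/seteqP; split=> // z Uz; apply: U0; exists z.
right; apply/seteqP; split=> // z _; apply: contrapT => nUz.
by apply: noU; exists U; split=> //; [exists a | exists z].
Qed.

Lemma korovin_translate_pair (G : zmodType) (X : topologicalType) (f : G -> X)
    (g1 g2 : G) (a b : X) :
  korovin f -> g1 <> g2 ->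
  exists g, translate g1 f g = a /\ translate g2 f g = b.
Proof.
move=> kf g12.
pose M := [set g1; g2].
have cM : countable M by apply/finite_set_countable/finite_set2.
have M1 : g1 \in M by apply/mem_set; left.
have M2 : g2 \in M by apply/mem_set; right.
pose h (m : set_type M) := if set_val m == g1 then a else b.
have [_ [g _ <-] hk] := kf M cM h.
exists g; rewrite /translate !(GRing.addrC g).
move: (hk (exist _ g1 M1)) (hk (exist _ g2 M2)).
by rewrite /h /= eqxx (negbTE (introN eqP (nesym g12))).
Qed.

Lemma korovin_orbit_accessible (G : zmodType) (X : topologicalType) (f : G -> X) :
  ~ anti_discrete X -> korovin f -> accessible_space (set_type (orbit_set f)).
Proof.
move=> nAD kf x y /eqP xy.
have [U [oU [a Ua] [b nUb]]] := not_anti_discrete_proper_open nAD.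
have [g1 _ x_def] := set_mem (valP x).
have [g2 _ y_def] := set_mem (valP y).
have g12 : g1 <> g2.
  by move=> e; apply: xy; apply: val_inj; rewrite /= -x_def -y_def e.
have [g [xg yg]] := korovin_translate_pair a b kf g12.
exists [set z : set_type (orbit_set f) | U (set_val z g)]; split.
- exists [set l : {ptws G -> X} | U (l g)] => //.
  exact: (proj1 (@continuousP {ptws G -> X} X (fun l => l g))
           (@proj_continuous G (fun _ => X) g)).
- by apply/mem_set; rewrite /= set_valE /= -x_def xg.
- by apply/mem_set; rewrite /= set_valE /= -y_def yg.
Qed.

Theorem proposition4p6 (X : topologicalType) (G : zmodType) :
  (exists x y : X, x <> y) ->
  infinite_set [set: G] ->
  ~ anti_discrete X ->
  clopen_base X ->
  forall f : G -> X, korovin f ->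
    regular_T1 (set_type (orbit_set f)) /\ clopen_base (set_type (orbit_set f)).
Proof.
move=> _ _ nAD cbX f kf.
have cbGf : clopen_base (set_type (orbit_set f)).
  exact/clopen_base_subspace/clopen_base_ptws.
split=> //; split.
- exact: korovin_orbit_accessible.
- exact: clopen_base_closure_nbhs.
Qed.
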